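(* Let $n\in\mathbb{N}$, $q\ge 2$, and let $\Gamma$ be a finite constraint language of $k$-ary relations over $[q]$. For $a,b\in[q]^n$, define $(a,b)\in\mathcal{E}$ if every instance of $\mathsf{CSP}(\Gamma)$ on $n$ variables that is satisfied by $a$ is also satisfied by $b$. Then $\mathcal{E}$ is an equivalence relation on $[q]^n$. Moreover, for every $a\in[q]^n$ there exists an instance $P_a$ of $\mathsf{CSP}(\Gamma)$ on $n$ variables with $\mathrm{Sat}(P_a)=[a]_{\mathcal{E}}$, the equivalence class of $a$ under $\mathcal{E}$.
   Context: An instance of $\mathsf{CSP}(\Gamma)$ on variables $x_1,\dots,x_n$ over $[q]=\{0,\dots,q-1\}$ is a finite set of constraints $\{R,(x_{i_1}+\lambda_{i_1},\dots,x_{i_k}+\lambda_{i_k})\}$ with $R\in\Gamma$, $(i_1,\dots,i_k)\in[n]^k$, $\lambda_{i_j}\in[q]$; an assignment $a\in[q]^n$ satisfies it if $(a_{i_1}+\lambda_{i_1},\dots,a_{i_k}+\lambda_{i_k})\in R$ (addition mod $q$), and satisfies the instance if it satisfies all its constraints. $\mathrm{Sat}(I)$ denotes the set of assignments satisfying $I$. *)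

From mathcomp Require Import all_boot.
Set Implicit Arguments. Unset Strict Implicit. Unset Printing Implicit Defensive.

Definition addq (q : nat) (x y : 'I_q) : 'I_q :=
  Ordinal (ltn_pmod (x + y) (leq_ltn_trans (leq0n x) (ltn_ord x))).

Definition relation (q k : nat) := {set k.-tuple 'I_q}.

Definition assignment (q n : nat) := {ffun 'I_n -> 'I_q}.

(* A constraint {R, (x_{i_1}+l_1, ..., x_{i_k}+l_k)}:
   relation R, variable indices (i_1..i_k), shifts (l_1..l_k). *)
Definition constraint (q n k : nat) :=
  (relation q k * k.-tuple 'I_n * k.-tuple 'I_q)%type.

Definition sat_constraint (q n k : nat) (a : assignment q n)
  (c : constraint q n k) : bool :=
  let: (R, idx, lam) := c in
  [tuple addq (a (tnth idx j)) (tnth lam j) | j < k] \in R.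

Definition is_instance (q n k : nat) (Gamma : seq (relation q k))
  (I : seq (constraint q n k)) : Prop :=
  forall c, c \in I -> c.1.1 \in Gamma.

Definition sat_instance (q n k : nat) (I : seq (constraint q n k))
  (a : assignment q n) : bool :=
  all (sat_constraint a) I.

Definition Sat (q n k : nat) (I : seq (constraint q n k)) : {set assignment q n} :=
  [set a | sat_instance I a].

Definition E (q n k : nat) (Gamma : seq (relation q k)) (a b : assignment q n) : Prop :=
  forall I : seq (constraint q n k), is_instance Gamma I ->
    sat_instance I a -> sat_instance I b.

Definition eq_class (q n k : nat) (Gamma : seq (relation q k)) (a : assignment q n)
  : assignment q n -> Prop := fun b => E Gamma a b.

From mathcomp Require Import all_boot.
Set Implicit Arguments. Unset Strict Implicit. Unset Printing Implicit Defensive.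

(* Since constraints carry arbitrary constant shifts, adding a fixed vector s
   to the shifts of an instance yields again an instance over Gamma, satisfied
   by a iff the original is satisfied by a + s; hence a E b implies
   (a + s) E (b + s).  For
   symmetry write b = a + d: translating a E (a + d) by multiples of d gives
   a chain (a + d) E (a + 2d) E ... E (a + qd) = a.  Finally, there are only
   finitely many constraints, so the class of a is cut out by the instance
   consisting of all constraints over Gamma that a satisfies. *)

Section IteratedInvariance.

Variables (T : Type) (r : T -> T -> Prop) (f : T -> T).
Hypothesis r_refl : forall x, r x x.
Hypothesis r_trans : forall x y z, r x y -> r y z -> r x z.
Hypothesis r_invariant : forall x y, r x y -> r (f x) (f y).

Lemma r_iter_step (x : T) m : r x (f x) -> r (iter m f x) (iter m.+1 f x).
Proof. by move=> rxfx; elim: m => //= m; apply: r_invariant. Qed.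

Lemma r_iter (x : T) m : r x (f x) -> r (f x) (iter m.+1 f x).
Proof.
move=> rxfx; elim: m => [|m IHm]; first exact: r_refl.
exact: r_trans IHm (r_iter_step _ rxfx).
Qed.

Lemma r_sym_periodic (x : T) m : iter m.+1 f x = x -> r x (f x) -> r (f x) x.
Proof. by move=> periodic /(r_iter m); rewrite periodic. Qed.

End IteratedInvariance.

Section Translation.

Variables (n q k : nat) (Gamma : seq (relation q k)).

Definition shift_assignment (s a : assignment q n) : assignment q n :=
  [ffun i => addq (a i) (s i)].

Definition shift_constraint (s : assignment q n) (c : constraint q n k) :
    constraint q n k :=
  let: (R, idx, lam) := c in
  (R, idx, [tuple addq (tnth lam j) (s (tnth idx j)) | j < k]).

Lemma sat_shift_constraint s a c :
  sat_constraint a (shift_constraint s c) = sat_constraint (shift_assignment s a) c.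
Proof.
case: c => [[R idx] lam] /=; congr (_ \in R).
apply: eq_from_tnth => j; apply: val_inj.
by rewrite !tnth_map !tnth_ord_tuple ffunE /= modnDmr modnDml addnAC addnA.
Qed.

Lemma sat_instance_shift s a I :
  sat_instance (map (shift_constraint s) I) a = sat_instance I (shift_assignment s a).
Proof. by rewrite /sat_instance all_map; apply: eq_all => c; apply: sat_shift_constraint. Qed.

Lemma is_instance_shift s I :
  is_instance Gamma I -> is_instance Gamma (map (shift_constraint s) I).
Proof. by move=> GI _ /mapP [[[R idx] lam] /GI GR ->]. Qed.

Lemma E_refl (a : assignment q n) : E Gamma a a.
Proof. by []. Qed.

Lemma E_trans (a b c : assignment q n) : E Gamma a b -> E Gamma b c -> E Gamma a c.
Proof. by move=> Eab Ebc I GI /(Eab I GI); apply: Ebc. Qed.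

Lemma E_shift (s a b : assignment q n) :
  E Gamma a b -> E Gamma (shift_assignment s a) (shift_assignment s b).
Proof.
move=> Eab I GI; rewrite -!sat_instance_shift.
exact/Eab/is_instance_shift.
Qed.

Lemma iter_shift_assignmentE s a m i :
  val (iter m (shift_assignment s) a i) = (a i + m * s i) %% q.
Proof.
elim: m => [|m IHm] /=; first by rewrite mul0n addn0 modn_small.
by rewrite ffunE /= -modnDml IHm !modnDml mulSn [s i + _]addnC addnA.
Qed.

Lemma iter_shift_assignment_period s a :
  iter q (shift_assignment s) a = a.
Proof.
apply/ffunP => i; apply: val_inj.
by rewrite iter_shift_assignmentE mulnC addnC modnMDl modn_small.
Qed.

Lemma shift_assignment_onto a b :
  0 < q -> exists s, shift_assignment s a = b.
Proof.
move=> q_gt0; exists [ffun i => Ordinal (ltn_pmod (b i + (q - a i)) q_gt0)].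
apply/ffunP => i; apply: val_inj; rewrite !ffunE /= modnDmr addnCA subnKC.
  by rewrite modnDr modn_small.
exact: ltnW.
Qed.

Lemma E_sym (a b : assignment q n) : 0 < q -> E Gamma a b -> E Gamma b a.
Proof.
move=> q_gt0; have [s <-] := shift_assignment_onto a b q_gt0.
apply: (r_sym_periodic E_refl E_trans (@E_shift s) (m := q.-1)).
by rewrite prednK // iter_shift_assignment_period.
Qed.

Definition class_instance (a : assignment q n) : seq (constraint q n k) :=
  [seq c <- enum {: constraint q n k}
     | (c.1.1 \in Gamma) && sat_constraint a c].

Lemma is_instance_class a : is_instance Gamma (class_instance a).
Proof. by move=> c; rewrite mem_filter => /andP [/andP []]. Qed.

Lemma sat_class_instance_self a : sat_instance (class_instance a) a.
Proof. by apply/allP => c; rewrite mem_filter => /andP [/andP []]. Qed.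

Lemma Sat_class_instance a b : b \in Sat (class_instance a) <-> E Gamma a b.
Proof.
rewrite inE; split=> [sat_b I GI sat_a | Eab].
  apply/allP => c cI; move/allP: sat_b; apply.
  by rewrite mem_filter mem_enum GI //= (allP sat_a).
by apply: Eab; [apply: is_instance_class | apply: sat_class_instance_self].
Qed.

End Translation.

Theorem theorem4p2 (n q k : nat) (Gamma : seq (relation q k)) :
  2 <= q ->
  ((forall a : assignment q n, E Gamma a a) /\
   (forall a b : assignment q n, E Gamma a b -> E Gamma b a) /\
   (forall a b c : assignment q n, E Gamma a b -> E Gamma b c -> E Gamma a c)) /\
  (forall a : assignment q n, exists P : seq (constraint q n k),
     is_instance Gamma P /\ (forall b : assignment q n, b \in Sat P <-> eq_class Gamma a b)).
Proof.
move=> q_ge2; have q_gt0 : 0 < q by apply: ltnW.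
split.
  split; first exact: E_refl.
  by split; [move=> a b; exact: E_sym | exact: E_trans].
move=> a; exists (class_instance Gamma a); split; first exact: is_instance_class.
by move=> b; apply: Sat_class_instance.
Qed.
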